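(* Let $p\in J$. The value of the linear program (LP): maximize $\pi_1(\Omega)$ over pairs $(\pi_1,\pi_2)\in\mathrm{cone}(\mathcal{E})\times\mathrm{cone}(\Omega^-)$ with $\pi_1+\pi_2=p$, equals the value of the program (LP'): maximize $\pi(\Omega)$ over $\pi\in\mathrm{cone}(\Omega)$ with $\pi\le p$ (coordinatewise) and $\sum_{\omega\in\Omega}\pi(\omega)r(\omega)\ge0$.
   Context: $\Omega$ is a finite set, $r:\Omega\to\mathbb{R}$; each $\omega$ is identified with a unit vector of $\mathbb{R}^\Omega$ and $\Delta(\Omega)$ with the unit simplex. $J=\{p\in\Delta(\Omega):\sum_\omega p(\omega)r(\omega)<0\}$, $\mathcal{F}=\{p\in\Delta(\Omega):\sum_\omega p(\omega)r(\omega)=0\}$, $\mathcal{E}$ is the set of extreme points of $\mathcal{F}$, $\Omega^-=\{\omega:r(\omega)<0\}$. For a finite set $A\subset\mathbb{R}^\Omega$, $\mathrm{cone}(A)$ is the closed convex hull of $A\cup\{0\}$; for $\pi\in\mathbb{R}^\Omega$, $\pi(\Omega)=\sum_\omega\pi(\omega)$. *)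

From mathcomp Require Import all_boot all_order all_algebra.
Set Implicit Arguments. Unset Strict Implicit. Unset Printing Implicit Defensive.
Import Order.TTheory GRing.Theory Num.Theory.
Local Open Scope ring_scope.

Section Defs.
Variables (R : realFieldType) (Omega : finType).

Definition unitv (w : Omega) : Omega -> R := fun w' => if w' == w then 1 else 0.

Definition mass (p : Omega -> R) : R := \sum_w p w.

Definition expect (r : Omega -> R) (p : Omega -> R) : R := \sum_w p w * r w.

Definition in_simplex (p : Omega -> R) : Prop :=
  (forall w, 0 <= p w) /\ mass p = 1.

Definition inJ (r : Omega -> R) (p : Omega -> R) : Prop :=
  in_simplex p /\ expect r p < 0.

Definition inF (r : Omega -> R) (p : Omega -> R) : Prop :=
  in_simplex p /\ expect r p = 0.

Definition extreme_point (S : (Omega -> R) -> Prop) (p : Omega -> R) : Prop :=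
  S p /\ forall (q1 q2 : Omega -> R) (t : R), S q1 -> S q2 -> 0 < t < 1 ->
    (forall w, p w = t * q1 w + (1 - t) * q2 w) -> q1 = q2.

Definition inE (r : Omega -> R) (p : Omega -> R) : Prop := extreme_point (inF r) p.

(* cone(A) := convex hull of A u {0}: finite combinations with nonnegative
   coefficients of total weight <= 1. *)
Definition cone (A : (Omega -> R) -> Prop) (pi : Omega -> R) : Prop :=
  exists (n : nat) (a : 'I_n -> (Omega -> R)) (l : 'I_n -> R),
    (forall i, A (a i)) /\ (forall i, 0 <= l i) /\ \sum_i l i <= 1 /\
    forall w, pi w = \sum_i l i * a i w.

Definition OmegaV (v : Omega -> R) : Prop := exists w, v = unitv w.
Definition OmegaMinusV (r : Omega -> R) (v : Omega -> R) : Prop :=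
  exists w, r w < 0 /\ v = unitv w.

Definition is_max_value (P : R -> Prop) (v : R) : Prop :=
  P v /\ forall x, P x -> x <= v.

Definition LP_values (r p : Omega -> R) (x : R) : Prop :=
  exists pi1 pi2 : Omega -> R,
    cone (inE r) pi1 /\ cone (OmegaMinusV r) pi2 /\
    (forall w, pi1 w + pi2 w = p w) /\ x = mass pi1.

Definition LP'_values (r p : Omega -> R) (x : R) : Prop :=
  exists pi : Omega -> R,
    cone OmegaV pi /\ (forall w, pi w <= p w) /\ 0 <= expect r pi /\
    x = mass pi.

End Defs.

(* Greedy solution of (LP'): keep [p] where [r] exceeds a threshold [t < 0],
   drop it below [t], and keep at [t] the fraction that makes [sum pi r = 0];
   the weights [1 - r w / t] certify that no feasible [pi] has larger mass.
   This [pi] also solves (LP): a nonnegative vector with [sum pi r = 0] is a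
   nonnegative combination of extreme points of [F] (unit vectors where [r = 0]
   and two-point mixtures of a positive and a negative atom), and [p - pi] is
   supported by [Omega^-]. Conversely the [pi1] part of any solution of (LP) is
   feasible for (LP'). *)

From Pilot Require Import Defs.
From mathcomp Require Import all_boot all_order all_algebra.
From mathcomp Require Import ring lra.
From Stdlib Require Import FunctionalExtensionality.
Set Implicit Arguments. Unset Strict Implicit. Unset Printing Implicit Defensive.
Import Order.TTheory GRing.Theory Num.Theory.
Local Open Scope ring_scope.

Section Cones.
Variables (R : realFieldType) (Omega : finType).
Implicit Types (a b w : Omega) (r pi : Omega -> R) (A : (Omega -> R) -> Prop).

Lemma unitv_ge0 a w : 0 <= unitv R a w.
Proof. by rewrite /unitv; case: eqP. Qed.

Lemma sum_unitv_l (f : Omega -> R) w : \sum_i f i * unitv R i w = f w.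
Proof.
rewrite (bigD1 w) //= /unitv eqxx mulr1 big1 ?addr0 // => i /negbTE.
by rewrite eq_sym => ->; rewrite mulr0.
Qed.

Lemma sum_unitv_r (g : Omega -> R) a : \sum_w g w * unitv R a w = g a.
Proof.
rewrite (bigD1 a) //= /unitv eqxx mulr1 big1 ?addr0 // => i /negbTE ->.
by rewrite mulr0.
Qed.

Lemma sum_mul_unitv2 (g : Omega -> R) a b (al be : R) :
  \sum_w g w * (al * unitv R a w + be * unitv R b w) = al * g a + be * g b.
Proof.
rewrite (eq_bigr (fun w => al * (g w * unitv R a w) + be * (g w * unitv R b w))).
  by rewrite big_split /= -!mulr_sumr !sum_unitv_r; ring.
by move=> w _; ring.
Qed.

Lemma cone_fin A (I : finType) (a : I -> Omega -> R) (l : I -> R) pi :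
  (forall i, l i != 0 -> A (a i)) -> (forall i, 0 <= l i) -> \sum_i l i <= 1 ->
  (forall w, pi w = \sum_i l i * a i w) -> cone A pi.
Proof.
move=> hA hl hs hpi.
have drop0 (F : I -> R) : (forall i, l i = 0 -> F i = 0) ->
    \sum_(j < #|[pred i | l i != 0]|) F (enum_val j) = \sum_i F i.
  move=> hF; rewrite -(big_enum_val F) /= big_mkcond /=.
  by apply: eq_bigr => i _; rewrite inE; case: eqP => // /hF ->.
exists #|[pred i | l i != 0]|, (fun j => a (enum_val j)), (fun j => l (enum_val j)).
split; first by move=> j; apply: hA; have := enum_valP j; rewrite inE.
split; first by move=> j; apply: hl.
split; first by rewrite (drop0 l).
by move=> w; rewrite hpi (drop0 (fun i => l i * a i w)) // => i ->; rewrite mul0r.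
Qed.

Lemma cone_ge0 A pi :
  (forall v, A v -> forall w, 0 <= v w) -> cone A pi -> forall w, 0 <= pi w.
Proof.
move=> hA [n [a [l [ha [hl [_ hpi]]]]]] w; rewrite hpi.
by apply: sumr_ge0 => i _; apply: mulr_ge0 => //; apply: hA.
Qed.

Lemma cone_expect0 r A pi :
  (forall v, A v -> expect r v = 0) -> cone A pi -> expect r pi = 0.
Proof.
move=> hA [n [a [l [ha [hl [_ hpi]]]]]]; rewrite /expect.
under eq_bigr do rewrite hpi mulr_suml.
rewrite exchange_big /=; apply: big1 => i _.
under eq_bigr do rewrite -mulrA.
by rewrite -mulr_sumr; have := hA _ (ha i); rewrite /expect => ->; rewrite mulr0.
Qed.

Lemma cone_OmegaV pi :
  (forall w, 0 <= pi w) -> mass pi <= 1 -> cone (@OmegaV R Omega) pi.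
Proof.
move=> pi_ge0 pi_le1; apply: (@cone_fin _ Omega (@unitv R Omega) pi) => //.
- by move=> w _; exists w.
- by move=> w; rewrite sum_unitv_l.
Qed.

Lemma cone_OmegaMinusV r pi :
  (forall w, 0 <= pi w) -> mass pi <= 1 -> (forall w, 0 <= r w -> pi w = 0) ->
  cone (OmegaMinusV r) pi.
Proof.
move=> pi_ge0 pi_le1 pi_neg; apply: (@cone_fin _ Omega (@unitv R Omega) pi) => //.
- move=> w piw0; exists w; split=> //; rewrite ltNge; apply: contra piw0.
  by move/pi_neg ->.
- by move=> w; rewrite sum_unitv_l.
Qed.

Section ExtremePoints.
Variable r : Omega -> R.
Implicit Types (e q : Omega -> R).

Lemma extreme_of_support_unique e :
  inF r e -> (forall q, inF r q -> (forall w, e w = 0 -> q w = 0) -> q = e) ->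
  Defs.inE r e.
Proof.
move=> Fe uniq_e; split=> // q1 q2 t Fq1 Fq2 /andP [t_gt0 t_lt1] e_mix.
have [[q1_ge0 _] _] := Fq1; have [[q2_ge0 _] _] := Fq2.
have mix0 w : e w = 0 -> q1 w = 0 /\ q2 w = 0.
  have t1_gt0 : 0 < 1 - t by rewrite subr_gt0.
  have := mulr_ge0 (ltW t_gt0) (q1_ge0 w); have := mulr_ge0 (ltW t1_gt0) (q2_ge0 w).
  rewrite e_mix => h2 h1 /eqP; rewrite paddr_eq0 //.
  by rewrite !mulf_eq0 (gt_eqF t_gt0) (gt_eqF t1_gt0) => /andP [/eqP ? /eqP ?].
have -> : q1 = e by apply: uniq_e => // w /mix0 [].
by apply/esym/uniq_e => // w /mix0 [].
Qed.

Lemma inE_unitv z : r z = 0 -> Defs.inE r (unitv R z).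
Proof.
move=> rz0.
apply: extreme_of_support_unique.
  split; first split; first exact: unitv_ge0.
  - by rewrite /mass -[RHS](sum_unitv_r (fun=> 1) z); apply: eq_bigr => w _; rewrite mul1r.
  - by rewrite /expect -[RHS]rz0 -(sum_unitv_r r z); apply: eq_bigr => w _; rewrite mulrC.
move=> q [[_ q_mass] _] q_supp.
have q_unitv w : q w = q z * unitv R z w.
  rewrite /unitv; case: eqP => [->|/eqP wz]; first by rewrite mulr1.
  by rewrite mulr0 q_supp // /unitv (negbTE wz).
have qz1 : q z = 1.
  by rewrite -q_mass /mass -(sum_unitv_r (fun=> q z) z); apply: eq_bigr => w _; rewrite -q_unitv.
by apply: functional_extensionality => w; rewrite q_unitv qz1 mul1r.
Qed.

(* The unique point of [F] supported on [{a, b}], when [r a > 0 > r b]. *)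
Definition edge_point a b : Omega -> R :=
  fun w => (- r b / (r a - r b)) * unitv R a w + (r a / (r a - r b)) * unitv R b w.

Lemma inE_edge_point a b : 0 < r a -> r b < 0 -> Defs.inE r (edge_point a b).
Proof.
move=> ra_gt0 rb_lt0.
have ab : a != b by apply/eqP => eab; move: ra_gt0; rewrite eab; lra.
have d_neq0 : r a - r b != 0 by apply/eqP; lra.
apply: extreme_of_support_unique.
  split; first split.
  - move=> w; apply: addr_ge0; apply: mulr_ge0; rewrite ?unitv_ge0 //;
      apply: divr_ge0; lra.
  - rewrite /mass (eq_bigr (fun w => 1 * edge_point a b w)) => [|w _]; last first.
      by rewrite mul1r.
    by rewrite sum_mul_unitv2; field.
  - rewrite /expect; under eq_bigr do rewrite mulrC.
    by rewrite sum_mul_unitv2; field.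
move=> q [[_ q_mass] q_expect] q_supp.
have q_pair w : q w = q a * unitv R a w + q b * unitv R b w.
  rewrite /unitv; case: eqP => [->|/eqP wa]; first by rewrite (negbTE ab) mulr1 mulr0 addr0.
  case: eqP => [->|/eqP wb]; first by rewrite mulr0 mulr1 add0r.
  by rewrite !mulr0 addr0 q_supp // /edge_point /unitv (negbTE wa) (negbTE wb) !mulr0 addr0.
have sum_q (g : Omega -> R) : \sum_w g w * q w = q a * g a + q b * g b.
  by under eq_bigr do rewrite q_pair; rewrite sum_mul_unitv2.
have qab1 : q a + q b = 1.
  by rewrite -q_mass /mass; under [RHS]eq_bigr do rewrite -[q _]mul1r; rewrite sum_q !mulr1.
have qab_r : q a * r a + q b * r b = 0.
  by rewrite -q_expect /expect; under [RHS]eq_bigr do rewrite mulrC; rewrite sum_q.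
have qa : q a = - r b / (r a - r b).
  by apply: (mulIf d_neq0); rewrite divfK //; nra.
have qb : q b = r a / (r a - r b).
  by apply: (mulIf d_neq0); rewrite divfK //; nra.
by apply: functional_extensionality => w; rewrite q_pair qa qb.
Qed.

End ExtremePoints.

Section BalancedCone.
Variables (r pi : Omega -> R).
Hypotheses (pi_ge0 : forall w, 0 <= pi w) (pi_expect0 : expect r pi = 0).

(* [pi] is the sum of [wpair a b *: edge_point r a b] over [r a > 0 > r b] and of
   its own restriction to [r = 0]; [M] is the mass of each side of the balance. *)
Let M := \sum_w (if 0 < r w then pi w * r w else 0).
Let wpos a := if 0 < r a then pi a / M else 0.
Let wneg b := if r b < 0 then pi b else 0.
Let wpair a b := wpos a * wneg b * (r a - r b).

Lemma neg_part_eq_pos_part : \sum_w wneg w * - r w = M.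
Proof.
have : expect r pi = M - \sum_w wneg w * - r w.
  rewrite /expect /M -sumrB; apply: eq_bigr => w _; rewrite /wneg.
  by case: (ltgtP (r w) 0) => [_|_|->]; rewrite ?ltxx; ring.
by rewrite pi_expect0 => /eqP; rewrite eq_sym subr_eq0 => /eqP.
Qed.

Lemma pos_part_eq0_vanish : M = 0 -> forall w, r w != 0 -> pi w = 0.
Proof.
move=> M0 w; case: ltgtP => // rw _.
- have neg_ge0 b : predT b -> 0 <= wneg b * - r b.
    by move=> _; rewrite /wneg; case: ifP => rb; rewrite ?mul0r // mulr_ge0 // oppr_ge0 ltW.
  have /(_ w) := psumr_eq0P neg_ge0 (etrans neg_part_eq_pos_part M0) isT.
  by rewrite /wneg /= rw => /eqP; rewrite mulf_eq0 oppr_eq0 (lt_eqF rw) orbF => /eqP.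
- have pos_ge0 b : predT b -> 0 <= if 0 < r b then pi b * r b else 0.
    by move=> _; case: ifP => // rb; rewrite mulr_ge0 // ltW.
  have /(_ w) := psumr_eq0P pos_ge0 M0 isT.
  by rewrite rw => /eqP; rewrite mulf_eq0 (gt_eqF rw) orbF => /eqP.
Qed.

Lemma wpos_mulM w : wpos w * M = if 0 < r w then pi w else 0.
Proof.
rewrite /wpos; case: ifP => rw; last by rewrite mul0r.
have [M0|M_neq0] := eqVneq M 0; last by rewrite divfK.
by rewrite M0 mulr0 pos_part_eq0_vanish // gt_eqF.
Qed.

Lemma wneg_mulMM w : wneg w * (M / M) = wneg w.
Proof.
have [M0|M_neq0] := eqVneq M 0; last by rewrite divff // mulr1.
rewrite /wneg M0 mul0r mulr0; case: ifP => // rw.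
by rewrite pos_part_eq0_vanish // lt_eqF.
Qed.

Lemma sum_wpos_mul_r : \sum_w wpos w * r w = M / M.
Proof.
by rewrite /M mulr_suml; apply: eq_bigr => w _; rewrite /wpos; case: ifP; rewrite ?mul0r // mulrAC.
Qed.

Lemma wpair_edge_point a b w :
  wpair a b * edge_point r a b w = wpos a * wneg b * (- r b * unitv R a w + r a * unitv R b w).
Proof.
rewrite /wpair /wpos /wneg; case: ifP => ra; last by rewrite !mul0r.
case: ifP => rb; last by rewrite !(mulr0, mul0r).
have d_neq0 : r a - r b != 0 by apply/eqP => d0; move: ra rb; lra.
by rewrite /edge_point; move: (pi a / M * pi b) => c; field.
Qed.

Lemma sum_wpair : \sum_a \sum_b wpair a b + \sum_w (if r w == 0 then pi w else 0) = mass pi.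
Proof.
have -> : \sum_a \sum_b wpair a b =
    (\sum_a wpos a * r a) * (\sum_b wneg b) + (\sum_a wpos a) * (\sum_b wneg b * - r b).
  rewrite !big_distrlr -big_split; apply: eq_bigr => a _ /=.
  by rewrite -big_split; apply: eq_bigr => b _ /=; rewrite /wpair; ring.
rewrite sum_wpos_mul_r neg_part_eq_pos_part [_ * \sum_b wneg b]mulrC (mulr_suml _ _ wneg) (mulr_suml _ _ wpos).
under eq_bigr do rewrite wneg_mulMM.
under [X in _ + X + _]eq_bigr do rewrite wpos_mulM.
rewrite /mass -!big_split; apply: eq_bigr => w _ /=; rewrite /wneg.
by case: (ltgtP (r w) 0); rewrite ?(addr0, add0r).
Qed.

Lemma sum_wpair_edge_point w :
  \sum_a \sum_b wpair a b * edge_point r a b w + (if r w == 0 then pi w else 0) = pi w.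
Proof.
have -> : \sum_a \sum_b wpair a b * edge_point r a b w =
    (\sum_a wpos a * unitv R a w) * (\sum_b wneg b * - r b) +
    (\sum_a wpos a * r a) * (\sum_b wneg b * unitv R b w).
  rewrite !big_distrlr -big_split; apply: eq_bigr => a _ /=.
  by rewrite -big_split; apply: eq_bigr => b _ /=; rewrite wpair_edge_point; ring.
rewrite !sum_unitv_l neg_part_eq_pos_part sum_wpos_mul_r wpos_mulM mulrC wneg_mulMM /wneg.
by case: (ltgtP (r w) 0); rewrite ?(addr0, add0r).
Qed.

Lemma cone_inE_of_expect0 : mass pi <= 1 -> cone (Defs.inE r) pi.
Proof.
move=> mass_le1.
pose I := (Omega * Omega + Omega)%type.
pose vec (i : I) := match i with inl ab => edge_point r ab.1 ab.2 | inr z => unitv R z end.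
pose wt (i : I) :=
  match i with inl ab => wpair ab.1 ab.2 | inr z => if r z == 0 then pi z else 0 end.
have fp_ge0 a : 0 <= wpos a.
  rewrite /wpos; case: ifP => // _; apply: divr_ge0 => //; apply: sumr_ge0 => w _.
  by case: ifP => // rw; rewrite mulr_ge0 // ltW.
apply: (@cone_fin _ I vec wt).
- case=> [[a b]|z] /=; last by case: (eqVneq (r z) 0) => [/inE_unitv|_] //; rewrite eqxx.
  rewrite /wpair /wpos /wneg; case: ifP => ra; last by rewrite !mul0r eqxx.
  by case: ifP => rb; [move=> _; exact: inE_edge_point | rewrite mulr0 mul0r eqxx].
- case=> [[a b]|z] /=; last by case: ifP.
  rewrite /wpair /wneg; case: ifP => rb; last by rewrite mulr0 mul0r.
  have [ra|ra] := ltP 0 (r a); first by rewrite !mulr_ge0 // subr_ge0 ltW // (lt_trans rb).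
  by rewrite /wpos ltNge ra mul0r mul0r.
- by rewrite big_sumType /= -(pair_bigA _ wpair) sum_wpair.
- move=> w; rewrite big_sumType /= sum_unitv_l -[LHS]sum_wpair_edge_point.
  by rewrite (pair_bigA _ (fun a b => wpair a b * edge_point r a b w)).
Qed.

End BalancedCone.
End Cones.

Section Threshold.
Variables (R : realFieldType) (Omega : finType) (r p : Omega -> R).
Hypotheses (p_ge0 : forall w, 0 <= p w) (p_expect_lt0 : expect r p < 0).

Definition expect_above (t : R) := \sum_w (if t < r w then p w * r w else 0).
Definition expect_from (t : R) := \sum_w (if t <= r w then p w * r w else 0).

Lemma expect_above_ge0_of_nonneg t :
  (forall w, t < r w -> 0 <= r w) -> 0 <= expect_above t.
Proof.
move=> hr; apply: sumr_ge0 => w _; case: ifP => // /hr rw.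
exact: mulr_ge0.
Qed.

(* Take for [t] the largest negative value of [r] with [expect_from t <= 0]:
   at the next value of [r] above [t], [expect_from] equals [expect_above t]. *)
Lemma exists_threshold :
  exists t, [/\ t < 0, 0 <= expect_above t & expect_from t <= 0].
Proof.
have [w0 rw0] : exists w0, r w0 < 0.
  case: (pickP (fun w => r w < 0)) => [w rw|r_ge0]; first by exists w.
  move: p_expect_lt0; rewrite ltNge => /negP []; apply: sumr_ge0 => w _.
  by rewrite mulr_ge0 // leNgt r_ge0.
case: (@arg_minP _ _ _ w0 predT r isT) => wm _ r_min.
pose P w := (r w < 0) && (expect_from (r w) <= 0).
have P_wm : P wm.
  rewrite /P (le_lt_trans (r_min w0 isT) rw0) /expect_from.
  by under eq_bigr do rewrite r_min //; exact: ltW.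
case: (@arg_maxP _ _ _ wm P r P_wm) => w1 /andP [rw1 from_w1] r_max.
exists (r w1); split=> //; rewrite leNgt; apply/negP => above_lt0.
case: (pickP (fun w => r w1 < r w < 0)) => [w /andP [w1w rw] | no_between].
- case: (@arg_minP _ _ _ w (fun w => r w1 < r w < 0) r) => [|w2 /andP [w1w2 rw2] r_min2].
    by rewrite w1w rw.
  have from_w2 : expect_from (r w2) = expect_above (r w1).
    apply: eq_bigr => z _; congr (if _ then _ else _).
    apply/idP/idP => [/(lt_le_trans w1w2) //|w1z].
    case: (ltP (r z) 0) => [rz|rz]; first by apply: r_min2; rewrite w1z.
    exact: le_trans (ltW rw2) rz.
  have := r_max w2; rewrite /P rw2 from_w2 ltW //= => /(_ isT).
  by rewrite leNgt w1w2.
- move: above_lt0; rewrite ltNge expect_above_ge0_of_nonneg // => z w1z.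
  by have := no_between z; rewrite w1z /= => /negbT; rewrite -leNgt.
Qed.

Lemma exists_balanced_truncation :
  exists2 t, t < 0 & exists x : Omega -> R,
    [/\ forall w, 0 <= x w, forall w, x w <= p w, expect r x = 0,
      forall w, t < r w -> x w = p w & forall w, r w < t -> x w = 0].
Proof.
have [t [t_lt0 above_ge0 from_le0]] := exists_threshold.
pose D := \sum_w (if r w == t then p w * r w else 0).
have from_above : expect_from t = expect_above t + D.
  rewrite /expect_from /expect_above /D -big_split; apply: eq_bigr => w _ /=.
  by case: (ltgtP t (r w)); rewrite ?(addr0, add0r).
(* When [D = 0], [theta] is [0] by the convention [x / 0 = 0]. *)
pose theta := expect_above t / - D.
have thetaD : theta * D = - expect_above t.
  have [D0|D_neq0] := eqVneq D 0; last by rewrite /theta; field.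
  by move: from_above from_le0 above_ge0; rewrite D0 mulr0; lra.
have theta_ge0 : 0 <= theta.
  by rewrite divr_ge0 //; move: from_above from_le0 above_ge0; lra.
have theta_le1 : theta <= 1.
  have [D0|D_neq0] := eqVneq D 0; first by rewrite /theta D0 oppr0 invr0 mulr0.
  have D_lt0 : D < 0.
    by rewrite lt_neqAle D_neq0 /=; move: from_above from_le0 above_ge0; lra.
  by rewrite ler_pdivrMr ?oppr_gt0 // mul1r; move: from_above from_le0; lra.
pose x w := if t < r w then p w else if r w == t then theta * p w else 0.
exists t => //; exists x; split=> [w|w||w rw|w rw].
- by rewrite /x; case: ifP => // _; case: ifP => // _; rewrite mulr_ge0.
- by rewrite /x; case: ifP => // _; case: ifP => // _; rewrite ler_piMl.
- have -> : expect r x = expect_above t + theta * D.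
    rewrite /expect /expect_above /D mulr_sumr -big_split; apply: eq_bigr => w _ /=.
    rewrite /x; case: ifP => [/lt_eqF|_]; first by rewrite eq_sym => ->; rewrite mulr0 addr0.
    by case: ifP; rewrite ?(mulr0, mul0r, add0r) // mulrA.
  by rewrite thetaD subrr.
- by rewrite /x rw.
- by rewrite /x ltNge ltW // (lt_eqF rw).
Qed.

End Threshold.

Section Duality.
Variables (R : realFieldType) (Omega : finType) (r : Omega -> R).
Implicit Types (p x y : Omega -> R).

Lemma mass_sub_expect_div x (t : R) :
  mass x - expect r x / t = \sum_w x w * (1 - r w / t).
Proof.
rewrite /mass /expect mulr_suml -sumrB; apply: eq_bigr => w _.
by rewrite mulrBr mulr1 mulrA.
Qed.

Lemma mass_le_of_dominated (t : R) x y :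
  t < 0 -> 0 <= expect r y -> expect r x = 0 ->
  (forall w, t < r w -> y w <= x w) -> (forall w, r w < t -> x w <= y w) ->
  mass y <= mass x.
Proof.
move=> t_lt0 y_expect x_expect above below.
apply: (@le_trans _ _ (mass y - expect r y / t)).
  by rewrite lerDl oppr_ge0 mulr_ge0_le0 // invr_le0 ltW.
rewrite -[mass x]subr0 -(mul0r t^-1) -x_expect !mass_sub_expect_div.
apply: ler_sum => w _; case: (ltgtP t (r w)) => [tw|wt|<-].
- by rewrite ler_wpM2r ?above // subr_ge0 ler_ndivrMr // mul1r ltW.
- by rewrite ler_wnM2r ?below // subr_le0 ler_ndivlMr // mul1r ltW.
- by rewrite divff ?(lt_eqF t_lt0) // subrr !mulr0.
Qed.

Lemma LP_values_sub p v : in_simplex p -> LP_values r p v -> LP'_values r p v.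
Proof.
move=> [p_ge0 p_mass] [pi1 [pi2 [pi1_cone [pi2_cone [pi_sum ->]]]]].
have pi1_ge0 : forall w, 0 <= pi1 w.
  by apply: cone_ge0 pi1_cone => e [[[e_ge0 _] _] _].
have pi2_ge0 : forall w, 0 <= pi2 w.
  by apply: cone_ge0 pi2_cone => _ [z [_ ->]]; exact: unitv_ge0.
have pi1_le_p w : pi1 w <= p w by rewrite -pi_sum lerDl.
exists pi1; split=> //.
- by apply: cone_OmegaV => //; rewrite -p_mass; exact: ler_sum.
- by rewrite (cone_expect0 _ pi1_cone) // => e [[_ e_expect] _].
Qed.

End Duality.

Theorem lemma2 (R : realFieldType) (Omega : finType) (r p : Omega -> R) :
  inJ r p ->
  exists v : R, is_max_value (LP_values r p) v /\ is_max_value (LP'_values r p) v.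
Proof.
move=> [[p_ge0 p_mass] p_expect_lt0].
have [t t_lt0 [x [x_ge0 x_le_p x_expect x_above x_below]]] :=
  exists_balanced_truncation p_ge0 p_expect_lt0.
have x_mass : mass x <= 1 by rewrite -p_mass; exact: ler_sum.
have LP'_max : is_max_value (LP'_values r p) (mass x).
  split; first by exists x; split; [exact: cone_OmegaV | rewrite x_expect].
  move=> _ [y [y_cone [y_le_p [y_expect ->]]]].
  have y_ge0 : forall w, 0 <= y w.
    by apply: cone_ge0 y_cone => _ [z ->]; exact: unitv_ge0.
  apply: (mass_le_of_dominated t_lt0 y_expect x_expect) => w rw.
    by rewrite x_above.
  by rewrite x_below.
exists (mass x); split=> //; split; last first.
  by move=> v /(LP_values_sub (conj p_ge0 p_mass)); exact: LP'_max.2.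
exists x, (fun w => p w - x w); split; first exact: cone_inE_of_expect0.
split; last by split=> // w; rewrite addrC subrK.
apply: cone_OmegaMinusV => [w||w rw]; first by rewrite subr_ge0.
  by rewrite -p_mass; apply: ler_sum => w _; rewrite lerBlDr lerDl.
by rewrite x_above ?subrr // (lt_le_trans t_lt0).
Qed.
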